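(* In the flow-sampling problem with $M\ge1$ devices, accuracies $\varphi_i\in(0,1]$ and external sampling probabilities $p_i\in(0,1)$, fix an integer $G\ge1$ and let the largest-order-statistic policy be the policy that in every slot draws $G$ integers independently and uniformly from $\{1,\dots,M\}$ (with replacement, independently of the state and of the past) and samples the device indexed by the largest of them. Its average cost is $$J_{\mathrm{order}}=\sum_{i=1}^{M}\frac{\varphi_i(1-q_i)(1-p_i)}{1-(1-q_i)(1-p_i)},\qquad q_i=\frac{i^G-(i-1)^G}{M^G}.$$ Moreover, if $p_1=\dots=p_M=p\in(0,1)$ and $\varphi_i=\sigma^{M-i}$ with $\sigma\in(0,1)$, then for fixed $G$, $$\lim_{M\to\infty}J_{\mathrm{order}}=\frac{1-p}{(1-\sigma)p}.$$
   Context: Flow-sampling model: a flow path passes through $M$ devices indexed $1,\dots,M$. Time is slotted, $t=0,1,2,\dots$. Each device $i$ has an accuracy $\varphi_i$ and a counter $n_i^t\in\{0,1,2,\dots\}$, with $n_i^0=0$. At the start of each slot $t$ the controller chooses an action $a^t\in\{1,\dots,M\}$ (the device it samples) according to a policy. Independently of everything else, for each $i$ and $t$ an event $H_i^t$ occurs with probability $p_i$, independently across $i$ and $t$. Counter dynamics: if $a^t=i$ then $n_i^{t+1}=0$; if $a^t\ne i$ then $n_i^{t+1}=0$ if $H_i^t$ occurs and $n_i^{t+1}=n_i^t+1$ otherwise. The immediate cost is $C(s^t)=\sum_{i=1}^M\varphi_i n_i^t$ and the average cost of policy $\mu$ is $J_\mu=\lim_{T\to\infty}\mathbb{E}_\mu\left[\frac1T\sum_{t=0}^{T-1}C(s^t)\right]$.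 *)

From HB Require Import structures.
From mathcomp Require Import all_boot all_order all_algebra.
From mathcomp Require Import all_classical all_reals all_analysis.
Set Implicit Arguments. Unset Strict Implicit. Unset Printing Implicit Defensive.
Import Order.TTheory GRing.Theory Num.Theory.
Import numFieldNormedType.Exports.
Local Open Scope ring_scope.

(* Devices are indexed by i : 'I_M, the ordinal i standing for device (val i).+1.
   Accuracies phi and probabilities p are given as functions nat -> R,
   evaluated at the 1-based device index. *)

(* Randomness of one slot: the G draws (each in 'I_M, ordinal d standing for
   integer d+1 in {1..M}) and the indicators of the events H_i^t. *)
Definition slot (M G : nat) := ({ffun 'I_G -> 'I_M} * {ffun 'I_M -> bool})%type.

Definition act_ord (M G : nat) (w : slot M G) : nat :=
  (\max_(g : 'I_G) val (w.1 g))%N.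

Definition slot_prob (R : realType) (M G : nat) (p : nat -> R) (w : slot M G) : R :=
  (M%:R ^+ G)^-1 *
  \prod_(i : 'I_M) (if w.2 i then p (val i).+1 else 1 - p (val i).+1).

Definition step (M G : nat) (w : slot M G) (n : 'I_M -> nat) : 'I_M -> nat :=
  fun i => if act_ord w == val i then 0%N
           else if w.2 i then 0%N else (n i).+1.

Definition state_of (M G : nat) (ws : seq (slot M G)) : 'I_M -> nat :=
  foldl (fun n w => step w n) (fun _ => 0%N) ws.

Definition cost (R : realType) (M : nat) (phi : nat -> R) (n : 'I_M -> nat) : R :=
  \sum_(i : 'I_M) phi (val i).+1 * (n i)%:R.

(* E[C(s^t)] under the largest-order-statistic policy: s^t is determined by the
   (independent) outcomes of slots 0..t-1. *)
Definition exp_cost (R : realType) (M G : nat) (phi p : nat -> R) (t : nat) : R :=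
  \sum_(w : {ffun 'I_t -> slot M G})
    (\prod_(j : 'I_t) slot_prob p (w j)) *
    cost phi (state_of [seq w j | j <- enum 'I_t]).

Definition avg_cost (R : realType) (M G : nat) (phi p : nat -> R) (T : nat) : R :=
  (T%:R)^-1 * \sum_(t < T) exp_cost M G phi p t.

Definition J_order (R : realType) (M G : nat) (phi p : nat -> R) : R :=
  limn (avg_cost M G phi p).

Definition q_ord (R : realType) (M G i : nat) : R :=
  ((i%:R) ^+ G - ((i.-1)%:R) ^+ G) / (M%:R ^+ G).

From HB Require Import structures.
From mathcomp Require Import all_boot all_order all_algebra.
From mathcomp Require Import all_classical all_reals all_analysis.
From mathcomp Require Import ring lra.
Import Order.TTheory GRing.Theory Num.Theory.
Import numFieldNormedType.Exports.
Local Open Scope classical_set_scope.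
Local Open Scope ring_scope.
Set Implicit Arguments. Unset Strict Implicit. Unset Printing Implicit Defensive.

(* Part 1.  The slots are i.i.d., and the counter of device i at time t is the
   length of the final run of slots that device i "survived" (it was neither
   sampled nor hit by H_i).  Writing this run length as
   n_i^t = sum_{k<t} [the last k+1 slots were survived], independence of the
   slots gives E[n_i^t] = a_i + ... + a_i^t, where a_i is the one-slot survival
   probability.  Counting the draw vectors whose maximum is below m (there are
   m^G of them) yields a_i = (1 - q_i)(1 - p_i).  Hence E[C(s^t)] is a finite sum
   of geometric partial sums converging to sum_i phi_i a_i/(1 - a_i), and by the
   Cesaro theorem the average cost has the same limit.

   Part 2.  With phi_i = sigma^(M-i) and p_i = p, each term a_i/(1 - a_i) lies
   within q_i/p^2 <= G/(M p^2) below (1-p)/p, while the weights sigma^(M-i) sum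
   to (1 - sigma^M)/(1 - sigma).  Squeezing gives the limit (1-p)/((1-sigma)p). *)

Definition run_step (n : nat) (b : bool) : nat := if b then n.+1 else 0%N.

Lemma run_lengthE (bs : seq bool) :
  foldl run_step 0%N bs =
  (\sum_(k < size bs) \prod_(size bs - k.+1 <= j < size bs) nth false bs j)%N.
Proof.
elim/last_ind: bs => [|bs b IH]; first by rewrite big_ord0.
rewrite foldl_rcons IH size_rcons.
have last_factor (k : 'I_(size bs).+1) :
    (\prod_((size bs).+1 - k.+1 <= j < (size bs).+1) nth false (rcons bs b) j =
     (\prod_(size bs - k <= j < size bs) nth false bs j) * b)%N.
  rewrite subSS big_nat_recr ?leq_subr //= nth_rcons ltnn eqxx.
  by congr (_ * _)%N; apply: eq_big_nat => j /andP[_ ltj]; rewrite nth_rcons ltj.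
rewrite (eq_bigr _ (fun k _ => last_factor k)) -big_distrl /= big_ord_recl /=.
rewrite subn0 big_geq // add1n; clear last_factor.
by case: b; rewrite /run_step ?muln1 ?muln0.
Qed.

Definition survives (M G : nat) (w : slot M G) (i : 'I_M) : bool :=
  (act_ord w != i) && ~~ w.2 i.

Lemma state_of_run (M G : nat) (ws : seq (slot M G)) (i : 'I_M) :
  state_of ws i = foldl run_step 0%N [seq survives w i | w <- ws].
Proof.
rewrite /state_of.
suff gen n0 : foldl (fun n w => step w n) n0 ws i =
              foldl run_step (n0 i) [seq survives w i | w <- ws] by exact: gen.
elim: ws n0 => [|w ws IH] n0 //=; rewrite IH; congr foldl.
by rewrite /step /run_step /survives; case: eqP => //=; case: (w.2 i).
Qed.

Lemma card_ord_lt (M m : nat) : (m <= M)%N -> #|[pred j : 'I_M | (j < m)%N]| = m.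
Proof.
move=> le_mM; rewrite -sum1_card.
rewrite (eq_bigl (fun j : 'I_M => (j < m)%N)) //.
rewrite -(big_mkord (fun j => (j < m)%N) (fun _ => 1%N)).
rewrite -(@big_nat_widen _ 0%N addn 0 m M xpredT) //=.
by rewrite sum_nat_const_nat subn0 muln1.
Qed.

(* The largest of [G >= 1] draws is below [m] iff every draw is: there are
   m^G such draw vectors. *)
Lemma card_max_lt (M G m : nat) : (0 < G)%N -> (m <= M)%N ->
  #|[pred d : {ffun 'I_G -> 'I_M} | (\max_(g : 'I_G) val (d g) < m)%N]| = (m ^ G)%N.
Proof.
move=> G0; case: m => [|m] le_mM; first by rewrite exp0n //; apply: eq_card0.
rewrite -[in RHS](card_ord_lt le_mM) -[G in RHS]card_ord -card_ffun_on.
apply: eq_card => d /=; rewrite !inE ltnS.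
apply/bigmax_leqP/ffun_onP => le_d g; first by rewrite inE /= ltnS le_d.
by have := le_d g; rewrite inE /= ltnS.
Qed.

Lemma sum_prod_indep (R : comPzRingType) (T : finType) (t : nat)
    (P : 'I_t -> T -> R) (g : T -> R) (A : pred 'I_t) :
  \sum_(w : {ffun 'I_t -> T}) (\prod_j P j (w j)) * \prod_(j | A j) g (w j)
  = \prod_j (if A j then \sum_x P j x * g x else \sum_x P j x).
Proof.
transitivity (\prod_j \sum_x (P j x * (if A j then g x else 1))); last first.
  by apply: eq_bigr => j _; case: (A j) => //; apply: eq_bigr => x _; rewrite mulr1.
rewrite bigA_distr_bigA; apply: eq_bigr => w _.
by rewrite big_split /=; congr (_ * _); rewrite big_mkcond.
Qed.

Lemma sum_indicator (R : pzSemiRingType) (T : finType) (b : pred T) :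
  \sum_(x : T) ((b x)%:R : R) = (#|b|)%:R.
Proof.
rewrite -sum1_card natr_sum [RHS]big_mkcond /=; apply: eq_bigr => x _.
by rewrite unfold_in; case: (b x).
Qed.

Lemma sum_pair (R : nmodType) (A B : finType) (F : A * B -> R) :
  \sum_x F x = \sum_a \sum_b F (a, b).
Proof. by rewrite pair_bigA; apply: eq_bigr => -[]. Qed.

Section OneSlot.
Variables (R : realType) (M G : nat) (p : nat -> R).
Hypotheses (M_gt0 : (0 < M)%N) (G_gt0 : (0 < G)%N).

Definition hit_prob (h : {ffun 'I_M -> bool}) : R :=
  \prod_(l : 'I_M) (if h l then p l.+1 else 1 - p l.+1).

Lemma sum_hit_prob : \sum_h hit_prob h = 1.
Proof.
rewrite /hit_prob.
rewrite -(bigA_distr_bigA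
  (fun (l : 'I_M) (b : bool) => if b then p l.+1 else 1 - p l.+1)).
by apply: big1 => l _; rewrite big_bool /= subrKC.
Qed.

Lemma sum_hit_prob_miss (i : 'I_M) : \sum_h hit_prob h * (~~ h i)%:R = 1 - p i.+1.
Proof.
have := @sum_prod_indep R bool M (fun l b => if b then p l.+1 else 1 - p l.+1)
   (fun b => (~~ b)%:R) (pred1 i).
rewrite (eq_bigr (fun h => hit_prob h * (~~ h i)%:R)) => [->|h _]; last first.
  by rewrite big_pred1_eq.
rewrite (bigD1 i) //= eqxx [X in _ * X]big1 => [|j /negbTE ->]; last first.
  by rewrite big_bool /= subrKC.
by rewrite mulr1 big_bool /= mulr0 mulr1 add0r.
Qed.

Lemma sum_slot_prob : \sum_w slot_prob p (w : slot M G) = 1.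
Proof.
rewrite sum_pair.
under eq_bigr do rewrite /slot_prob /= -mulr_sumr -/hit_prob sum_hit_prob mulr1.
rewrite sumr_const card_ffun !card_ord -[_ *+ (M ^ G)%N]mulr_natr natrX mulVf //.
by rewrite expf_neq0 // pnatr_eq0 -lt0n.
Qed.

(* Number of draw vectors whose maximum is not the 0-based index [i]:
   all M^G of them minus the (i+1)^G - i^G with maximum exactly [i]. *)
Lemma sum_max_neq (i : 'I_M) :
  \sum_(d : {ffun 'I_G -> 'I_M}) (((\max_(g : 'I_G) val (d g))%N != i)%:R : R) =
  M%:R ^+ G - ((i.+1)%:R ^+ G - i%:R ^+ G).
Proof.
set mx := fun d : {ffun 'I_G -> 'I_M} => (\max_(g : 'I_G) val (d g))%N.
have neq_split d : ((mx d != i)%:R : R) =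
    1 - ((mx d < i.+1)%N)%:R + ((mx d < i)%N)%:R.
  case: (ltngtP (mx d) i) => cmp.
  - by rewrite ltnS (ltnW cmp) /= subrr add0r.
  - by rewrite ltnS leqNgt cmp /= subr0 addr0.
  - by rewrite cmp ltnSn /= subrr addr0.
rewrite (eq_bigr _ (fun d _ => neq_split d)) big_split /= sumrB.
rewrite !sum_indicator !card_max_lt // ?(ltnW (ltn_ord i)) //.
by rewrite sumr_const card_ffun !card_ord !natrX; ring.
Qed.

Lemma survive_prob (i : 'I_M) :
  \sum_w slot_prob p (w : slot M G) * (survives w i)%:R =
  (1 - q_ord R M G i.+1) * (1 - p i.+1).
Proof.
have natr_andb (a b : bool) : ((a && b)%:R : R) = a%:R * b%:R.
  by case: a; case: b; rewrite ?mulr0 ?mulr1 ?mul0r.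
rewrite sum_pair.
transitivity ((M%:R ^+ G)^-1 *
    (\sum_(d : {ffun 'I_G -> 'I_M}) (((\max_(g : 'I_G) val (d g))%N != i)%:R)) *
    \sum_h hit_prob h * (~~ h i)%:R); last first.
  rewrite sum_max_neq sum_hit_prob_miss /q_ord /=; congr (_ * _); field.
  by rewrite expf_neq0 // pnatr_eq0 -lt0n.
rewrite -mulrA mulr_suml [RHS]mulr_sumr; apply: eq_bigr => d _.
rewrite mulrA mulr_sumr; apply: eq_bigr => h _.
by rewrite /slot_prob /survives /act_ord natr_andb /= -/(hit_prob h); ring.
Qed.

End OneSlot.

Section ExpectedCost.
Variables (R : realType) (M G : nat) (phi p : nat -> R).
Hypotheses (M_gt0 : (0 < M)%N) (G_gt0 : (0 < G)%N).

Definition surv_prob (i : 'I_M) : R := (1 - q_ord R M G i.+1) * (1 - p i.+1).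

Lemma counter_natr t (w : {ffun 'I_t -> slot M G}) (i : 'I_M) :
  ((state_of [seq w j | j <- enum 'I_t] i)%:R : R) =
  \sum_(k < t) \prod_(j < t | (t - k.+1 <= j)%N) ((survives (w j) i)%:R : R).
Proof.
rewrite state_of_run run_lengthE -map_comp size_map size_enum_ord natr_sum.
apply: eq_bigr => k _; rewrite natr_prod big_geq_mkord.
by apply: eq_bigr => j _; rewrite (nth_map j) ?size_enum_ord // nth_ord_enum.
Qed.

Lemma exp_counter t (i : 'I_M) :
  \sum_(w : {ffun 'I_t -> slot M G})
     (\prod_j slot_prob p (w j)) * (state_of [seq w j | j <- enum 'I_t] i)%:R =
  \sum_(k < t) surv_prob i ^+ k.+1.
Proof.
under eq_bigr do rewrite counter_natr mulr_sumr.
rewrite exchange_big /=; apply: eq_bigr => k _.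
rewrite (@sum_prod_indep R _ t (fun _ w => slot_prob p w)
  (fun w => (survives w i)%:R) (fun j : 'I_t => (t - k.+1 <= j)%N)).
rewrite (eq_bigr (fun j : 'I_t => if (t - k.+1 <= j)%N then surv_prob i else 1));
  last by move=> j _; case: ifP => _; [exact: survive_prob | exact: sum_slot_prob].
rewrite -big_mkcond /=.
transitivity (\prod_(t - k.+1 <= j < t) surv_prob i).
  by rewrite big_geq_mkord; apply: eq_bigl.
by rewrite prodr_const_nat subKn.
Qed.

Lemma exp_costE t :
  exp_cost M G phi p t = \sum_(i : 'I_M) phi i.+1 * \sum_(k < t) surv_prob i ^+ k.+1.
Proof.
rewrite /exp_cost /cost.
under eq_bigr do rewrite mulr_sumr.
rewrite exchange_big /=; apply: eq_bigr => i _.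
rewrite -exp_counter mulr_sumr; apply: eq_bigr => w _.
by rewrite mulrCA.
Qed.

End ExpectedCost.

Lemma q_ord_ge0_le1 (R : realType) (M G i : nat) : (0 < G)%N -> (1 <= i <= M)%N ->
  0 <= q_ord R M G i <= 1.
Proof.
move=> G_gt0; case: i => [|i] //= le_iM.
have M_gt0 : (0 < M)%N by apply: leq_trans le_iM.
rewrite /q_ord /= -!natrX -natrB ?leq_exp2r ?leqnSn //.
rewrite divr_ge0 //= ler_pdivrMr ?ltr0n ?expn_gt0 ?M_gt0 // mul1r ler_nat.
by apply: leq_trans (leq_subr _ _) _; rewrite leq_exp2r.
Qed.

(* q_i <= G/M: by subrXX, i^G - (i-1)^G is a sum of G terms each at most M^(G-1). *)
Lemma q_ord_le (R : realType) (M G i : nat) : (0 < G)%N -> (1 <= i <= M)%N ->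
  q_ord R M G i <= G%:R / M%:R.
Proof.
move=> G_gt0 /andP[i_ge1 le_iM]; have M_gt0 : (0 < M)%N by apply: leq_trans le_iM.
have MR_gt0 : 0 < (M%:R : R) by rewrite ltr0n.
have unit_gap : (i%:R - i.-1%:R : R) = 1.
  by case: i i_ge1 le_iM => // i _ _; rewrite -natrB // subSnn.
have term_le k : (k < G)%N ->
    (i%:R ^+ (G.-1 - k) * i.-1%:R ^+ k : R) <= M%:R ^+ G.-1.
  move=> lt_kG.
  have -> : (M%:R ^+ G.-1 : R) = M%:R ^+ (G.-1 - k) * M%:R ^+ k.
    by rewrite -exprD subnK // -ltnS prednK.
  apply: ler_pM; rewrite ?exprn_ge0 ?ler0n //; apply: lerXn2r;
    rewrite ?nnegrE ?ler0n ?ler_nat //.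
  exact: leq_trans (leq_pred _) le_iM.
rewrite /q_ord subrXX unit_gap mul1r.
have -> : (M%:R ^+ G : R) = M%:R ^+ G.-1 * M%:R by rewrite -exprSr prednK.
rewrite ler_pdivrMr ?mulr_gt0 ?exprn_gt0 //.
apply: le_trans (_ : _ <= \sum_(k < G) (M%:R ^+ G.-1 : R)) _.
  by apply: ler_sum => k _; apply: term_le.
rewrite sumr_const card_ord -[_ *+ G]mulr_natl.
by rewrite mulrCA divfK ?gt_eqF // mulrC.
Qed.

Section AverageCost.
Variables (R : realType) (M G : nat) (phi p : nat -> R).
Hypotheses (M_gt0 : (0 < M)%N) (G_gt0 : (0 < G)%N).
Hypothesis p_prob : forall i : nat, (1 <= i <= M)%N -> 0 < p i < 1.

(* a_i < 1 because p_i > 0, which makes every geometric series below converge. *)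
Lemma surv_prob_ge0_lt1 (i : 'I_M) : 0 <= surv_prob G p i < 1.
Proof.
have /andP[q_ge0 q_le1] : 0 <= q_ord R M G i.+1 <= 1.
  by apply: q_ord_ge0_le1; rewrite ?ltn_ord.
have /andP[p_gt0 p_lt1] : 0 < p i.+1 < 1 by apply: p_prob; rewrite ltn_ord.
rewrite /surv_prob; apply/andP; split; last by nra.
by rewrite mulr_ge0 // subr_ge0 // ltW.
Qed.

(* E[C(s^t)] converges to sum_i phi_i a_i / (1 - a_i), a finite sum of
   geometric series. *)
Lemma exp_cost_cvg : exp_cost M G phi p @ \oo -->
  \sum_(i : 'I_M) phi i.+1 * (surv_prob G p i / (1 - surv_prob G p i)).
Proof.
have -> : exp_cost M G phi p =
    (fun t => \sum_(i : 'I_M) phi i.+1 *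
       series (geometric (surv_prob G p i) (surv_prob G p i)) t).
  apply/funext => t; rewrite exp_costE //; apply: eq_bigr => i _.
  by congr (_ * _); rewrite /series /= big_mkord; apply: eq_bigr => k _; rewrite exprS.
apply: cvg_big => [|i _]; first exact: add_continuous.
apply: cvgMl_tmp; apply: cvg_geometric_series.
by have /andP[a_ge0 a_lt1] := surv_prob_ge0_lt1 i; rewrite ger0_norm.
Qed.

(* The average cost is the Cesaro mean of E[C(s^t)], hence has the same limit. *)
Lemma avg_cost_cvg : avg_cost M G phi p @ \oo -->
  \sum_(1 <= i < M.+1) phi i * (1 - q_ord R M G i) * (1 - p i)
                         / (1 - (1 - q_ord R M G i) * (1 - p i)).
Proof.
have -> : \sum_(1 <= i < M.+1) phi i * (1 - q_ord R M G i) * (1 - p i)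
                                 / (1 - (1 - q_ord R M G i) * (1 - p i)) =
    \sum_(i : 'I_M) phi i.+1 * (surv_prob G p i / (1 - surv_prob G p i)).
  by rewrite big_add1 big_mkord; apply: eq_bigr => i _; rewrite /surv_prob !mulrA.
rewrite -cvg_shiftS.
have -> : [sequence avg_cost M G phi p n.+1]_n = arithmetic_mean (exp_cost M G phi p).
  by apply/funext => n; rewrite /avg_cost /arithmetic_mean /series /= big_mkord.
exact/cesaro/exp_cost_cvg.
Qed.

End AverageCost.

(* Expected stationary counter a/(1-a) of a device surviving each slot with
   probability a = (1-x)(1-p). *)
Definition surv_ratio (R : realType) (p x : R) : R :=
  (1 - x) * (1 - p) / (1 - (1 - x) * (1 - p)).

Lemma surv_ratio_bounds (R : realType) (p x e : R) :
  0 < p < 1 -> 0 <= x <= e -> x <= 1 ->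
  (1 - p) / p - e / p ^+ 2 <= surv_ratio p x <= (1 - p) / p.
Proof.
move=> /andP[p_gt0 p_lt1] /andP[x_ge0 le_xe] x_le1; rewrite /surv_ratio.
set D := 1 - (1 - x) * (1 - p).
have le_pD : p <= D by rewrite /D; nra.
have D_gt0 : 0 < D by apply: lt_le_trans le_pD.
have -> : (1 - x) * (1 - p) / D = (1 - p) / p - x * (1 - p) / (p * D).
  by rewrite /D; field; rewrite -/D !gt_eqF.
have gap_ge0 : 0 <= x * (1 - p) / (p * D).
  by apply: divr_ge0; apply: mulr_ge0; lra.
apply/andP; split; last by rewrite gerBl.
rewrite lerD2l lerN2 ler_pdivrMr ?mulr_gt0 //.
have -> : e / p ^+ 2 * (p * D) = e * (D / p) by field; rewrite gt_eqF.
have D_ratio_ge1 : 1 <= D / p by rewrite ler_pdivlMr // mul1r.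
have e_ge0 : 0 <= e by apply: le_trans le_xe.
nra.
Qed.

Lemma sum_weights (R : realType) (s : R) (M : nat) : s != 1 ->
  \sum_(1 <= i < M.+1) s ^+ (M - i) = (1 - s ^+ M) / (1 - s).
Proof.
move=> s_neq1.
transitivity (\sum_(0 <= k < M) s ^+ k).
  rewrite big_rev_mkord subn1 /= big_mkord.
  by apply: eq_bigr => k _; rewrite subSS subKn // ltnW.
have := congr1 (fun f => f M) (geometric_seriesE 1 s_neq1).
by rewrite /series /= mul1r => <-; apply: eq_bigr => k _; rewrite mul1r.
Qed.

Section GeometricAccuracies.
Variables (R : realType) (G : nat) (p s : R).
Hypotheses (G_gt0 : (0 < G)%N) (p_prob : 0 < p < 1) (s_prob : 0 < s < 1).

Definition J_geom (M : nat) : R :=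
  \sum_(1 <= i < M.+1) s ^+ (M - i) * surv_ratio p (q_ord R M G i).

Definition weight_sum (M : nat) : R := \sum_(1 <= i < M.+1) s ^+ (M - i).

Lemma weight_sum_le (M : nat) : weight_sum M <= (1 - s)^-1.
Proof.
have /andP[s_gt0 s_lt1] := s_prob.
rewrite /weight_sum sum_weights ?lt_eqF // ler_pdivrMr ?subr_gt0 //.
by rewrite mulVf ?gt_eqF ?subr_gt0 // gerBl exprn_ge0 // ltW.
Qed.

Lemma J_geom_bounds (M : nat) : (0 < M)%N ->
  (1 - p) / p * weight_sum M - G%:R / M%:R / p ^+ 2 * weight_sum M <= J_geom M
  <= (1 - p) / p * weight_sum M.
Proof.
move=> M_gt0; rewrite /J_geom /weight_sum -mulrBl !mulr_sumr.
have term_bounds i : (1 <= i < M.+1)%N ->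
    ((1 - p) / p - G%:R / M%:R / p ^+ 2) * s ^+ (M - i) <=
    s ^+ (M - i) * surv_ratio p (q_ord R M G i) <= (1 - p) / p * s ^+ (M - i).
  rewrite ltnS => iM.
  have w_ge0 : 0 <= s ^+ (M - i) by rewrite exprn_ge0 // ltW //; case/andP: s_prob.
  have /andP[q_ge0 q_le1] := q_ord_ge0_le1 R G_gt0 iM.
  have /andP[lo hi] : (1 - p) / p - G%:R / M%:R / p ^+ 2 <=
      surv_ratio p (q_ord R M G i) <= (1 - p) / p.
    by apply: surv_ratio_bounds => //; rewrite q_ge0 q_ord_le.
  by rewrite mulrC ler_wpM2l //= [X in _ <= X]mulrC ler_wpM2l.
by apply/andP; split; apply: ler_sum_nat => i /term_bounds/andP[].
Qed.

(* Squeeze J_geom between (1-p)/p * weight_sum, minus O(1/M), and (1-p)/p * weight_sum. *)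
Lemma J_geom_cvg : (fun n => J_geom n.+1) @ \oo --> (1 - p) / ((1 - s) * p).
Proof.
have /andP[s_gt0 s_lt1] := s_prob; have /andP[p_gt0 p_lt1] := p_prob.
pose c := (p ^+ 2)^-1 * (1 - s)^-1.
have c_ge0 : 0 <= c by rewrite mulr_ge0 // invr_ge0 ?exprn_ge0 ?subr_ge0 ?ltW.
have upper_cvg : (fun n => (1 - p) / p * weight_sum n.+1) @ \oo -->
    (1 - p) / ((1 - s) * p).
  have -> : (1 - p) / ((1 - s) * p) = (1 - p) / p * ((1 - 0) / (1 - s)).
    by rewrite subr0; field; rewrite !gt_eqF ?subr_gt0.
  under eq_fun do rewrite /weight_sum sum_weights ?lt_eqF //.
  apply: cvgMl_tmp; apply: cvgMr_tmp; apply: cvgB; first exact: cvg_cst.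
  have := @cvg_expr R s; rewrite ger0_norm ?ltW // => /(_ s_lt1).
  by rewrite -cvg_shiftS.
apply: (@squeeze_cvgr _ _ _ _
   (fun n => (1 - p) / p * weight_sum n.+1 - G%:R / n.+1%:R * c)
   (fun n => (1 - p) / p * weight_sum n.+1)); last exact: upper_cvg.
  near=> n; have /andP[lo hi] := J_geom_bounds (ltn0Sn n).
  rewrite hi andbT; apply: le_trans lo; rewrite lerD2l lerN2.
  rewrite /c -mulrA ler_wpM2l ?divr_ge0 ?ler0n // ler_wpM2l ?weight_sum_le //.
  by rewrite ltW // invr_gt0 exprn_gt0.
rewrite -[X in _ --> X]subr0 -(mul0r c); apply: cvgB => //; apply: cvgMr_tmp.
rewrite -(mulr0 G%:R); apply: cvgMl_tmp; exact: cvg_harmonic.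
Unshelve. all: by end_near.
Qed.

End GeometricAccuracies.

Lemma J_order_geom (R : realType) (M G : nat) (p s : R) :
  (0 < M)%N -> (0 < G)%N -> 0 < p < 1 ->
  J_order M G (fun i => s ^+ (M - i)) (fun _ => p) = J_geom G p s M.
Proof.
move=> M_gt0 G_gt0 p_prob; apply: cvg_lim; first exact: Rhausdorff.
have -> : J_geom G p s M = \sum_(1 <= i < M.+1) s ^+ (M - i) * (1 - q_ord R M G i) *
    (1 - p) / (1 - (1 - q_ord R M G i) * (1 - p)).
  by apply: eq_bigr => i _; rewrite /surv_ratio !mulrA.
exact: avg_cost_cvg.
Qed.

Unset Implicit Arguments.

Theorem proposition3 (R : realType) (G : nat) (HG : (1 <= G)%N) :
  (forall (M : nat) (phi p : nat -> R),
     (1 <= M)%N ->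
     (forall i : nat, (1 <= i <= M)%N -> 0 < phi i <= 1) ->
     (forall i : nat, (1 <= i <= M)%N -> 0 < p i < 1) ->
     avg_cost M G phi p @ \oo -->
       \sum_(1 <= i < M.+1)
          phi i * (1 - q_ord R M G i) * (1 - p i)
            / (1 - (1 - q_ord R M G i) * (1 - p i)))
  /\
  (forall (p sigma : R), 0 < p < 1 -> 0 < sigma < 1 ->
     (fun n : nat => J_order n.+1 G (fun i => sigma ^+ (n.+1 - i)%N) (fun _ => p))
       @ \oo --> (1 - p) / ((1 - sigma) * p)).
Proof.
split=> [M phi p M_gt0 _ p_prob | p sigma p_prob sigma_prob].
  exact: avg_cost_cvg.
under eq_fun do rewrite J_order_geom //.
exact: J_geom_cvg.
Qed.
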